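(* Let $Y\subset\mathbb{R}^2$ be a finite point set in general position. Let $w_1$ and $w_2$ be two points of $\mathrm{Vor}_Q(Y)$, each a Voronoi edge bend or a Voronoi vertex, that are adjacent along a Voronoi edge of $\mathrm{Vor}_Q(Y)$ (i.e., consecutive bends/vertices on that edge). Then for every point $x$ on the segment $w_1w_2$, we have $Q^*_x\subseteq Q^*_{w_1}\cup Q^*_{w_2}$. The same conclusion holds if $w_1$ and $w_2$ are the two Voronoi vertices that are the endpoints of a Voronoi edge $e$ of $\mathrm{Vor}_Q(Y)$ and $x$ is any point on $e$.
   Context: Let $Q\subset\mathbb{R}^2$ be a convex polygon with a constant number of vertices containing the origin in its interior. For $x,y\in\mathbb{R}^2$, $d_Q(x,y)=\min\{\lambda\ge 0: y\in\lambda Q+x\}$. Let $Q^*=\{-x:x\in Q\}$, so $d_{Q^*}(x,y)=d_Q(y,x)$. For a finite set $Y$ and $p\in Y$, the Voronoi cell is $V_p(Y)=\{x\in\mathbb{R}^2: d_Q(p,x)\le d_Q(q,x)\ \forall q\in Y\}$, and $\mathrm{Vor}_Q(Y)$ is the subdivision of the plane into these cells. Each Voronoi edge (common boundary of two cells) is a polygonal curve; its interior vertices are called Voronoi edge bends. For $x\in\mathbb{R}^2$, $Q^*_x$ denotes the largest homothetic copy $\lambda Q^*+x$ ($\lambda\ge 0$) of $Q^*$ centered at $x$ such that $\mathrm{int}(Q^*_x)\cap Y=\emptyset$. General position means: no two sides of $Q$ are parallel; no line through two points of $Y$ is parallel to a side of $Q$; no four points of $Y$ lie on the boundary of a homothetic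 copy of $Q^*$. *)

From mathcomp Require Import all_boot all_order all_algebra.
From mathcomp Require Import classical_sets reals.

Set Implicit Arguments.
Unset Strict Implicit.
Unset Printing Implicit Defensive.

Import Order.TTheory GRing.Theory Num.Theory.
Local Open Scope ring_scope.
Local Open Scope classical_set_scope.

Definition pt (R : realType) := (R * R)%type.

Definition porig (R : realType) : pt R := (0, 0).
Definition padd (R : realType) (a b : pt R) : pt R := (a.1 + b.1, a.2 + b.2).
Definition psub (R : realType) (a b : pt R) : pt R := (a.1 - b.1, a.2 - b.2).
Definition pscale (R : realType) (l : R) (a : pt R) : pt R := (l * a.1, l * a.2).
Definition cross (R : realType) (a b : pt R) : R := a.1 * b.2 - a.2 * b.1.
Definition sqnorm (R : realType) (a : pt R) : R := a.1 ^+ 2 + a.2 ^+ 2.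
(* orientation of (a,b,c): > 0 iff c is strictly to the left of line ab *)
Definition orient (R : realType) (a b c : pt R) : R := cross (psub b a) (psub c a).

Definition seg_pt (R : realType) (a b : pt R) (t : R) : pt R :=
  padd a (pscale t (psub b a)).
Definition on_seg (R : realType) (a b x : pt R) : Prop :=
  exists t : R, 0 <= t <= 1 /\ x = seg_pt a b t.
Definition on_open_seg (R : realType) (a b x : pt R) : Prop :=
  exists t : R, 0 < t < 1 /\ x = seg_pt a b t.

Definition vtx (R : realType) (vs : seq (pt R)) (i : nat) : pt R :=
  nth (porig R) vs (i %% size vs).
Definition side_dir (R : realType) (vs : seq (pt R)) (i : nat) : pt R :=
  psub (vtx vs i.+1) (vtx vs i).

(* vs lists the vertices of a (strictly) convex polygon counterclockwise, and
   the origin lies in the interior of the polygon. *)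
Definition convex_polygon_0 (R : realType) (vs : seq (pt R)) : Prop :=
  [/\ (3 <= size vs)%N,
      (forall i j, (i < size vs)%N -> (j < size vs)%N -> j != i ->
          j != (i.+1 %% size vs)%N ->
          0 < orient (vtx vs i) (vtx vs i.+1) (vtx vs j))
    & (forall i, (i < size vs)%N -> 0 < orient (vtx vs i) (vtx vs i.+1) (porig R))].

Definition inQ (R : realType) (vs : seq (pt R)) (z : pt R) : Prop :=
  forall i, (i < size vs)%N -> 0 <= orient (vtx vs i) (vtx vs i.+1) z.
Definition intQ (R : realType) (vs : seq (pt R)) (z : pt R) : Prop :=
  forall i, (i < size vs)%N -> 0 < orient (vtx vs i) (vtx vs i.+1) z.
Definition on_side (R : realType) (vs : seq (pt R)) (i : nat) (z : pt R) : Prop :=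
  on_seg (vtx vs i) (vtx vs i.+1) z.

Definition dQ (R : realType) (vs : seq (pt R)) (x y : pt R) : R :=
  inf [set l : R | 0 <= l /\ exists q, inQ vs q /\ y = padd x (pscale l q)].

(* The homothetic copy l Q^* + c of Q^* = -Q, its interior and its boundary *)
Definition hom_Qstar (R : realType) (vs : seq (pt R)) (l : R) (c : pt R) : set (pt R) :=
  [set z | exists q, inQ vs q /\ z = psub c (pscale l q)].
Definition int_hom_Qstar (R : realType) (vs : seq (pt R)) (l : R) (c : pt R) : set (pt R) :=
  [set z | 0 < l /\ exists q, intQ vs q /\ z = psub c (pscale l q)].
Definition bd_hom_Qstar (R : realType) (vs : seq (pt R)) (l : R) (c : pt R) : set (pt R) :=
  [set z | exists i q, (i < size vs)%N /\ on_side vs i q /\ z = psub c (pscale l q)].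

Definition empty_radius (R : realType) (vs : seq (pt R)) (Y : seq (pt R)) (x : pt R) : R :=
  sup [set l : R | 0 <= l /\ forall y, y \in Y -> ~ int_hom_Qstar vs l x y].
Definition Qstar_at (R : realType) (vs : seq (pt R)) (Y : seq (pt R)) (x : pt R) : set (pt R) :=
  hom_Qstar vs (empty_radius vs Y x) x.

Definition vcell (R : realType) (vs : seq (pt R)) (Y : seq (pt R)) (p : pt R) : set (pt R) :=
  [set x | forall q, q \in Y -> dQ vs p x <= dQ vs q x].

Definition general_position (R : realType) (vs : seq (pt R)) (Y : seq (pt R)) : Prop :=
  [/\ (forall i j, (i < size vs)%N -> (j < size vs)%N -> i != j ->
          cross (side_dir vs i) (side_dir vs j) != 0),
      (forall p q i, p \in Y -> q \in Y -> p != q -> (i < size vs)%N ->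
          cross (psub q p) (side_dir vs i) != 0)
    & (forall (l : R) (c p1 p2 p3 p4 : pt R), 0 < l ->
          p1 \in Y -> p2 \in Y -> p3 \in Y -> p4 \in Y -> uniq [:: p1; p2; p3; p4] ->
          ~ [/\ bd_hom_Qstar vs l c p1, bd_hom_Qstar vs l c p2,
                bd_hom_Qstar vs l c p3 & bd_hom_Qstar vs l c p4])].

Definition vor_vertex (R : realType) (vs : seq (pt R)) (Y : seq (pt R)) (w : pt R) : Prop :=
  exists p q r, [/\ p \in Y, q \in Y, r \in Y, uniq [:: p; q; r] &
     [/\ vcell vs Y p w, vcell vs Y q w & vcell vs Y r w]].

Definition straight_at (R : realType) (E : set (pt R)) (w : pt R) : Prop :=
  exists (e : R) (d : pt R), [/\ 0 < e, d != porig R &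
     forall z, sqnorm (psub z w) < e ->
        (E z <-> exists t : R, z = padd w (pscale t d))].

Definition vor_bend (R : realType) (vs : seq (pt R)) (Y : seq (pt R)) (w : pt R) : Prop :=
  exists p q, [/\ p \in Y, q \in Y, p != q &
     [/\ vcell vs Y p w, vcell vs Y q w,
     (forall r, r \in Y -> vcell vs Y r w -> r = p \/ r = q) &
     ~ straight_at (vcell vs Y p `&` vcell vs Y q) w]].

Definition consecutive_on_edge (R : realType) (vs : seq (pt R)) (Y : seq (pt R))
    (w1 w2 : pt R) : Prop :=
  [/\ w1 != w2,
      vor_bend vs Y w1 \/ vor_vertex vs Y w1,
      vor_bend vs Y w2 \/ vor_vertex vs Y w2 &
      exists p q, [/\ p \in Y, q \in Y, p != q,
        (forall x, on_seg w1 w2 x -> vcell vs Y p x /\ vcell vs Y q x) &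
        (forall x, on_open_seg w1 w2 x -> ~ vor_bend vs Y x /\ ~ vor_vertex vs Y x)]].

(* x lies on the Voronoi edge (between V_p and V_q) whose endpoints are the
   Voronoi vertices w1 and w2: the edge is traced by a polygonal path
   w1 = u_0, u_1, ..., u_k = w2 contained in V_p /\ V_q, meeting no Voronoi
   vertex except at its two ends, and touching w1 (resp. w2) only at its start
   (resp. end). *)
Definition on_edge_between (R : realType) (vs : seq (pt R)) (Y : seq (pt R))
    (w1 w2 x : pt R) : Prop :=
  exists p q (us : seq (pt R)),
    let ws := w1 :: rcons us w2 in
    let k := size us in
    [/\ p \in Y, q \in Y, p != q &
     [/\ (forall i, (i <= k)%N -> nth w1 ws i != nth w1 ws i.+1),
      (forall i (t : R), (i <= k)%N -> 0 <= t <= 1 ->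
          let z := seg_pt (nth w1 ws i) (nth w1 ws i.+1) t in
          [/\ vcell vs Y p z, vcell vs Y q z,
              (z = w1 -> i = 0%N /\ t = 0),
              (z = w2 -> i = k /\ t = 1) &
              (z != w1 -> z != w2 -> ~ vor_vertex vs Y z)]) &
      exists i, (i <= k)%N /\ on_seg (nth w1 ws i) (nth w1 ws i.+1) x]].

From mathcomp Require Import all_boot all_order all_algebra.
From mathcomp Require Import classical_sets reals.
From mathcomp Require Import ring lra zify.
Import Order.TTheory GRing.Theory Num.Theory.
Local Open Scope ring_scope.
Local Open Scope classical_set_scope.

(* The distance d_Q(x, y) is the gauge of [y - x] with respect to [Q], the
   maximum of the linear forms that equal 1 on the sides of [Q].  Hence Q*_x
   is the "disk" {z | gauge (x - z) <= gauge (x - p)} for any nearest site p.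
   A point of the Voronoi edge of p and q lies on their bisector, and the
   disks centred on the bisector all pass through p and q.  When pq is
   parallel to no side of Q these disks form a monotone pencil, ordered by the
   height s(c) = orient p q c of the centre over the line pq: left of pq they
   grow with s, right of pq they shrink.  This rests on the fact that where
   the triangle inequality of the gauge is tight, both vectors lie in the cone
   of a common side of Q, which would make pq parallel to that side.  So Q*_x
   lies in the union of Q*_w1 and Q*_w2 whenever s(x) is between s(w1) and
   s(w2).  On a segment w1 w2 this holds because s is affine; along a
   polygonal Voronoi edge it follows from the intermediate value theorem,
   since s is injective on the bisector and the edge meets w1 and w2 only at
   its ends. *)

Lemma pt_eq (R : realType) (a b : pt R) : a.1 = b.1 -> a.2 = b.2 -> a = b.
Proof. by case: a b => ? ? [? ?] /= -> ->. Qed.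

Ltac pt_ring :=
  apply: pt_eq; rewrite /seg_pt /padd /psub /pscale /porig /=; ring.
Ltac pt_field :=
  apply: pt_eq; rewrite /seg_pt /padd /psub /pscale /porig /=; field.

Section Reals.
Context {R : realType}.
Implicit Types a b x : R.

Definition between a b x := (a <= x <= b) \/ (b <= x <= a).

Lemma between_split a b c x : between a c x -> between a b x \/ between b c x.
Proof. by rewrite /between; lra. Qed.

Lemma between_lerp a b x : between a b x ->
  exists2 t, 0 <= t <= 1 & (1 - t) * a + t * b = x.
Proof.
case: (eqVneq a b) => [<- | neq_ab] H.
  by exists 0; rewrite ?lexx ?ler01 //; move: H; rewrite /between; lra.
have d_neq0 : b - a != 0 by rewrite subr_eq0 eq_sym.
exists ((x - a) / (b - a)); last by field.
case: (ltP a b) => [lt_ab | le_ba].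
  have d_gt0 : 0 < b - a by rewrite subr_gt0.
  rewrite divr_ge0 ?ler_pdivrMr //= ?mul1r; move: H; rewrite /between; lra.
have d_lt0 : b - a < 0 by rewrite subr_lt0 lt_def neq_ab.
rewrite ler_ndivrMr // ler_ndivlMr // mul0r mul1r; move: H; rewrite /between; lra.
Qed.

Lemma affine_first_zero {a0 a1 b0 b1} : 0 <= a0 -> 0 <= b0 -> a1 < 0 \/ b1 < 0 ->
  exists2 t, 0 <= t <= 1 &
    ((1 - t) * a0 + t * a1 = 0 /\ 0 <= (1 - t) * b0 + t * b1) \/
    ((1 - t) * b0 + t * b1 = 0 /\ 0 <= (1 - t) * a0 + t * a1).
Proof.
(* the zero [a0 / (a0 - a1)] of the first function comes no later than the
   zero of the second one, if any *)
wlog a_first : a0 a1 b0 b1 / a1 < 0 /\ (0 <= b1 \/ a0 * (b0 - b1) <= b0 * (a0 - a1)).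
  move=> W a0_ge0 b0_ge0 H.
  have [a_first | b_first] :
      (a1 < 0 /\ (0 <= b1 \/ a0 * (b0 - b1) <= b0 * (a0 - a1))) \/
      (b1 < 0 /\ (0 <= a1 \/ b0 * (a0 - a1) <= a0 * (b0 - b1))) by lra.
    by apply: W.
  have [t t01 Ht] := W b0 b1 a0 a1 b_first b0_ge0 a0_ge0 ltac:(lra).
  by exists t => //; case: Ht; [right | left].
move=> a0_ge0 b0_ge0 _; case: a_first => a1_lt0 b_later.
have d_gt0 : 0 < a0 - a1 by lra.
set t := a0 / (a0 - a1).
have td : t * (a0 - a1) = a0 by rewrite mulfVK ?gt_eqF.
have t01 : 0 <= t <= 1 by rewrite /t divr_ge0 ?ler_pdivrMr ?mul1r //=; lra.
exists t => //.
left; split.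
  have -> : (1 - t) * a0 + t * a1 = a0 - t * (a0 - a1) by ring.
  by rewrite td subrr.
case: b_later => [b1_ge0 | ta_le_tb].
  by apply: addr_ge0; apply: mulr_ge0; lra.
rewrite -(pmulr_rge0 _ d_gt0).
have -> : (a0 - a1) * ((1 - t) * b0 + t * b1) = (a0 - a1) * b0 - t * (a0 - a1) * (b0 - b1).
  by ring.
by rewrite td; lra.
Qed.

Lemma inf_min (E : set R) a : E a -> lbound E a -> inf E = a.
Proof.
move=> Ea lbE; apply/le_anti; rewrite lb_le_inf ?andbT; last by [].
  by apply: ge_inf => //; exists a.
by exists a.
Qed.

Lemma sup_max (E : set R) a : E a -> ubound E a -> sup E = a.
Proof.
move=> Ea ubE; apply/le_anti; rewrite ge_sup /=; [|by exists a|by []].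
by apply: sup_upper_bound => //; split; exists a.
Qed.

End Reals.

(** * Segments, triangles and polygonal paths *)

Section Plane.
Context {R : realType}.
Implicit Types a b c u v y : pt R.

Lemma seg_pt0 a b : seg_pt a b 0 = a. Proof. by pt_ring. Qed.
Lemma seg_pt1 a b : seg_pt a b 1 = b. Proof. by pt_ring. Qed.

Lemma on_seg_sym {a b u} : on_seg a b u -> on_seg b a u.
Proof. by case=> t [t01 ->]; exists (1 - t); split; [lra | pt_ring]. Qed.

Lemma on_seg_sub {a b y u} : on_seg a b y -> on_seg a y u -> on_seg a b u.
Proof.
case=> s [s01 ->] [t [t01 ->]]; exists (t * s); split; first by nra.
by pt_ring.
Qed.

Lemma orient_seg a b u v t :
  orient a b (seg_pt u v t) = (1 - t) * orient a b u + t * orient a b v.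
Proof. by rewrite /orient /cross /seg_pt /padd /pscale /psub /=; ring. Qed.

Lemma orientC a b c : orient b c a = orient a b c.
Proof. by rewrite /orient /cross /psub /=; ring. Qed.

Lemma orientNC a b c : orient b a c = - orient a b c.
Proof. by rewrite /orient /cross /psub /=; ring. Qed.

Lemma orient_src a b : orient a b a = 0.
Proof. by rewrite /orient /cross /psub /=; ring. Qed.

Lemma orient_dst a b : orient a b b = 0.
Proof. by rewrite /orient /cross /psub /=; ring. Qed.

Lemma collinear_seg_pt {a b y} : a != b -> orient a b y = 0 ->
  exists t, y = seg_pt a b t.
Proof.
case: a b y => [a1 a2] [b1 b2] [y1 y2] neq_ab.
rewrite /orient /cross /seg_pt /padd /pscale /psub /= => hy.
case: (eqVneq (b1 - a1) 0) => [d1_eq0 | d1_neq0].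
  have d2_neq0 : b2 - a2 != 0.
    by apply: contra neq_ab => /eqP d2_eq0; apply/eqP/pt_eq => /=; lra.
  exists ((y2 - a2) / (b2 - a2)); apply: pt_eq => /=; last by field.
  move/eqP: hy; rewrite d1_eq0 mul0r sub0r oppr_eq0 mulf_eq0 (negbTE d2_neq0).
  by rewrite subr_eq0 => /eqP ->; rewrite mulr0 addr0.
exists ((y1 - a1) / (b1 - a1)); apply: pt_eq => /=; first by field.
by apply: (mulfI d1_neq0); rewrite mulrDr mulrCA mulrA mulfVK //; lra.
Qed.

Lemma cross_eq0_porig a b v :
  cross a b != 0 -> cross a v = 0 -> cross b v = 0 -> v = porig R.
Proof.
move=> ab0 av0 bv0; apply: pt_eq; apply: (mulIf ab0); rewrite mul0r.
  have -> : v.1 * cross a b = b.1 * cross a v - a.1 * cross b v by rewrite /cross; ring.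
  by rewrite av0 bv0 !mulr0 subrr.
have -> : v.2 * cross a b = b.2 * cross a v - a.2 * cross b v by rewrite /cross; ring.
by rewrite av0 bv0 !mulr0 subrr.
Qed.

(* Barycentric coordinate of [u] with respect to the vertex [a] of the
   triangle [abc]; the other two coordinates are obtained by rotating [abc]. *)
Definition bary a b c u : R := orient b c u / orient a b c.

Lemma bary_seg a b c u v t :
  bary a b c (seg_pt u v t) = (1 - t) * bary a b c u + t * bary a b c v.
Proof. by rewrite /bary orient_seg; ring. Qed.

Section Triangle.
Context {a b c : pt R}.
Hypothesis abc_nondeg : orient a b c != 0.

Let orient_bca : orient b c a = orient a b c. Proof. exact: orientC. Qed.
Let orient_cab : orient c a b = orient a b c.
Proof. by rewrite /orient /cross /psub /=; ring. Qed.

Lemma bary_sum u : bary a b c u + bary b c a u + bary c a b u = 1.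
Proof.
rewrite /bary orient_bca orient_cab -!mulrDl -[X in _ = X](divff abc_nondeg).
by congr (_ / _); rewrite /orient /cross /psub /=; ring.
Qed.

Lemma bary_comb u : u = padd (pscale (bary a b c u) a)
                            (padd (pscale (bary b c a u) b) (pscale (bary c a b u) c)).
Proof.
rewrite /bary orient_bca orient_cab.
have D_neq0 := abc_nondeg; set D := orient a b c in D_neq0 *.
have ex1 : D * u.1 = orient b c u * a.1 + orient c a u * b.1 + orient a b u * c.1.
  by rewrite /D /orient /cross /psub /=; ring.
have ex2 : D * u.2 = orient b c u * a.2 + orient c a u * b.2 + orient a b u * c.2.
  by rewrite /D /orient /cross /psub /=; ring.
by apply: pt_eq; apply: (mulfI D_neq0); rewrite /= ?ex1 ?ex2; field.
Qed.

Lemma bary_decomp u :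
  psub c u = padd (pscale (bary a b c u) (psub c a)) (pscale (bary b c a u) (psub c b)).
Proof.
rewrite {1}(bary_comb u).
have -> : bary c a b u = 1 - bary a b c u - bary b c a u by have := bary_sum u; lra.
by pt_ring.
Qed.

Lemma bary_edge u : bary a b c u = 0 -> 0 <= bary b c a u -> 0 <= bary c a b u ->
  on_seg b c u.
Proof.
move=> A0 B0 C0; have S := bary_sum u.
exists (bary c a b u); split; first by lra.
rewrite {1}(bary_comb u) A0.
have -> : bary b c a u = 1 - bary c a b u by lra.
by pt_ring.
Qed.

Lemma on_seg_bary {y} : on_seg a b y ->
  [/\ 0 <= bary a b c y, 0 <= bary b c a y & bary c a b y = 0].
Proof.
case=> t [t01 ->]; rewrite !bary_seg /bary !orient_src !orient_dst.
by rewrite orient_bca orient_cab !mul0r !divff //; split; lra.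
Qed.

End Triangle.

Lemma triangle_exit {a b c y v} : orient a b c != 0 ->
  0 <= bary a b c y -> 0 <= bary b c a y -> 0 <= bary c a b y -> 0 <= bary c a b v ->
  (0 <= bary a b c v /\ 0 <= bary b c a v) \/
  exists2 u, on_seg y v u & on_seg b c u \/ on_seg c a u.
Proof.
move=> abc Ay By Cy Cv.
have [|out] : (0 <= bary a b c v /\ 0 <= bary b c a v) \/
    (bary a b c v < 0 \/ bary b c a v < 0) by lra.
  by left.
right; have [t t01 Ht] := affine_first_zero Ay By out.
exists (seg_pt y v t); first by exists t.
have Cu : 0 <= bary c a b (seg_pt y v t) by rewrite bary_seg; nra.
case: Ht => -[Au Bu]; rewrite -!bary_seg in Au Bu.
  by left; apply: (bary_edge abc).
have bca : orient b c a != 0 by rewrite orientC.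
by right; apply: (bary_edge bca).
Qed.

Lemma bary_flip a b c u : bary a c b u = bary a b c u.
Proof.
rewrite /bary orientNC.
have -> : orient a c b = - orient a b c by rewrite /orient /cross /psub /=; ring.
by rewrite invrN mulrNN.
Qed.

Lemma bary_vertex a b c : orient a b c != 0 -> bary a b c a = 1.
Proof. by move=> abc; rewrite /bary orientC divff. Qed.

Lemma triangle_cross_side {a b c v} : orient a b c != 0 ->
  bary a b c v < 0 -> 0 <= bary c a b v <= 1 ->
  exists2 u, on_open_seg v a u & on_seg b c u.
Proof.
move=> abc Av Cv.
have [|t t01 At] := @between_lerp _ (bary a b c v) 1 0; first by rewrite /between; lra.
exists (seg_pt v a t).
  by exists t; split=> //; nra.
have Cu : bary c a b (seg_pt v a t) = (1 - t) * bary c a b v.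
  by rewrite bary_seg /bary orient_src mul0r mulr0 addr0.
have Au : bary a b c (seg_pt v a t) = 0 by rewrite bary_seg bary_vertex.
have S := bary_sum abc (seg_pt v a t); rewrite Au Cu in S.
by apply: (bary_edge abc) => //; rewrite ?Cu; nra.
Qed.

Lemma on_seg_split {a b c y} : on_seg a b c -> on_seg a b y ->
  on_seg a c y \/ on_seg b c y.
Proof.
case=> k [k01 ->] [t [t01 ->]].
case: (leP t k) => [le_tk | lt_kt].
  left; case: (eqVneq k 0) => [k0 | k_neq0].
    exists 0; split; first by rewrite lexx ler01.
    have -> : t = 0 by lra.
    by pt_ring.
  exists (t / k); split; last by pt_field.
  by rewrite divr_ge0 ?ler_pdivrMr ?mul1r //=; lra.
right; exists ((1 - t) / (1 - k)); split; last by pt_field; rewrite subr_eq0 gt_eqF //; lra.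
by rewrite divr_ge0 ?ler_pdivrMr ?mul1r //=; lra.
Qed.

Definition seg_affine (f : pt R -> R) :=
  forall u v t, f (seg_pt u v t) = (1 - t) * f u + t * f v.

Lemma orient_seg_affine a b : seg_affine (orient a b).
Proof. exact: orient_seg. Qed.

Lemma seg_ivt {f u v t1 t2 x} : seg_affine f -> 0 <= t1 <= t2 ->
  between (f (seg_pt u v t1)) (f (seg_pt u v t2)) x ->
  exists2 t, t1 <= t <= t2 & f (seg_pt u v t) = x.
Proof.
move=> f_aff t12 /between_lerp[s s01 <-].
exists ((1 - s) * t1 + s * t2); first by nra.
by rewrite !f_aff; ring.
Qed.

(* A point of the polygonal path [P 0, P 1, ...] is given by a segment number
   and a parameter in [0, 1]; these pairs are ordered lexicographically. *)
Lemma polyline_ivt {f} {P : nat -> pt R} {i t1 j t2 x} : seg_affine f ->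
  0 <= t1 <= 1 -> 0 <= t2 <= 1 -> (i <= j)%N -> (i = j -> t1 <= t2) ->
  between (f (seg_pt (P i) (P i.+1) t1)) (f (seg_pt (P j) (P j.+1) t2)) x ->
  exists k t, [/\ 0 <= t <= 1, (i <= k <= j)%N, (k = i -> t1 <= t),
                 (k = j -> t <= t2) & f (seg_pt (P k) (P k.+1) t) = x].
Proof.
move=> f_aff t1_01 t2_01 /subnKC <-; move: (j - i)%N => n.
elim: n i t1 t1_01 => [|n IH] i t1 t1_01 ij_t12.
  rewrite addn0 in ij_t12 * => /(seg_ivt f_aff) [|t t12 ft].
    by have := ij_t12 erefl; lra.
  by exists i, t; split=> //; [lra | lia | move=> _; lra | move=> _; lra].
case/(between_split _ (f (P i.+1))) => Hx.
  have Hx' : between (f (seg_pt (P i) (P i.+1) t1)) (f (seg_pt (P i) (P i.+1) 1)) x.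
    by rewrite seg_pt1.
  have [|t t1t ft] := seg_ivt f_aff _ Hx'; first by lra.
  by exists i, t; split=> //; [lra | lia | move=> _; lra | move=> ?; exfalso; lia].
have Hx' : between (f (seg_pt (P i.+1) (P i.+2) 0))
    (f (seg_pt (P (i.+1 + n)%N) (P (i.+1 + n)%N.+1) t2)) x by rewrite addSnnS seg_pt0.
have t0_01 : 0 <= (0 : R) <= 1 by rewrite lexx ler01.
have t2_ge0 : 0 <= t2 by case/andP: t2_01.
have [k [t [t01 ik kt1 kt2 ft]]] := IH i.+1 0 t0_01 (fun _ => t2_ge0) Hx'.
case/andP: ik => ik1 ik2; exists k, t; split=> //.
- by rewrite (ltnW ik1) -addSnnS.
- by move=> ki; move: ik1; rewrite ki ltnn.
- by rewrite -addSnnS.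
Qed.

Lemma seg_affine_between f a b t : seg_affine f -> 0 <= t <= 1 ->
  between (f a) (f b) (f (seg_pt a b t)).
Proof.
move=> f_aff /andP[t0 t1]; rewrite f_aff /between.
by case: (leP (f a) (f b)) => h; [left | right]; apply/andP; split; nra.
Qed.

Lemma polyline_between {f} {P : nat -> pt R} {k i0 t0} : seg_affine f ->
  (i0 <= k)%N -> 0 <= t0 <= 1 ->
  (forall i t, (i <= k)%N -> 0 <= t <= 1 ->
     f (seg_pt (P i) (P i.+1) t) = f (P 0) -> i = 0%N /\ t = 0) ->
  (forall i t, (i <= k)%N -> 0 <= t <= 1 ->
     f (seg_pt (P i) (P i.+1) t) = f (P k.+1) -> i = k /\ t = 1) ->
  between (f (P 0)) (f (P k.+1)) (f (seg_pt (P i0) (P i0.+1) t0)).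
Proof.
move=> f_aff i0k t0_01 only_first only_last; set v := f (seg_pt _ _ t0).
have /andP[t0_ge0 t0_le1] := t0_01.
have zero01 : 0 <= (0 : R) <= 1 by rewrite lexx ler01.
have one01 : 0 <= (1 : R) <= 1 by rewrite lexx ler01.
have [//|[before|after]] : between (f (P 0)) (f (P k.+1)) v \/
    between (f (P 0)) v (f (P k.+1)) \/ between v (f (P k.+1)) (f (P 0)).
- by rewrite /between; lra.
- rewrite -[f (P 0)](congr1 f (seg_pt0 _ (P 1))) in before.
  have [i [t [t_01 /andP[_ ii0] _ it0 ft]]] :=
    polyline_ivt (P := P) (j := i0) (t2 := t0) f_aff zero01 t0_01 (leq0n i0)
      (fun _ => t0_ge0) before.
  have [ik t1] := only_last i t (leq_trans ii0 i0k) t_01 ft.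
  have i0E : i0 = k by apply/eqP; rewrite eqn_leq i0k -ik.
  have t0E : t0 = 1 by have := it0 (etrans ik (esym i0E)); lra.
  by rewrite /v i0E t0E seg_pt1 /between; lra.
- rewrite -[f (P k.+1)](congr1 f (seg_pt1 (P k) _)) in after.
  have [i [t [t_01 /andP[i0i ik] it0 _ ft]]] :=
    polyline_ivt (P := P) (i := i0) (t1 := t0) f_aff t0_01 one01 i0k
      (fun _ => t0_le1) after.
  have [i0' t0'] := only_first i t ik t_01 ft.
  have i0E : i0 = 0%N by move: i0i; rewrite i0' leqn0 => /eqP.
  have t0E : t0 = 0 by have := it0 (etrans i0' (esym i0E)); lra.
  by rewrite /v i0E t0E seg_pt0 /between; lra.
Qed.

End Plane.

(** * The gauge of [Q] *)

Section Gauge.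
Context {R : realType} (vs : seq (pt R)).
Hypothesis Qconvex : convex_polygon_0 vs.

(* [Q] is the intersection of the half-planes [side_form i <= 1], the i-th side
   lying on the line [side_form i = 1]. *)
Definition side_form (i : nat) (v : pt R) : R :=
  - cross (side_dir vs i) v / orient (vtx vs i) (vtx vs i.+1) (porig R).

Definition gauge (v : pt R) : R := \big[Num.max/0]_(i < size vs) side_form i v.

Lemma side_formD i u v : side_form i (padd u v) = side_form i u + side_form i v.
Proof. by rewrite /side_form -mulrDl; congr (_ * _); rewrite /cross /=; ring. Qed.

Lemma side_formB i u v : side_form i (psub u v) = side_form i u - side_form i v.
Proof. by rewrite /side_form -mulrBl; congr (_ * _); rewrite /cross /=; ring. Qed.

Lemma side_formZ i l v : side_form i (pscale l v) = l * side_form i v.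
Proof. by rewrite /side_form mulrA; congr (_ * _); rewrite /cross /=; ring. Qed.

Lemma side_height_gt0 (i : 'I_(size vs)) :
  0 < orient (vtx vs i) (vtx vs i.+1) (porig R).
Proof. by case: Qconvex => _ _; apply. Qed.

Lemma side_form_le1 (i : 'I_(size vs)) z :
  (0 <= orient (vtx vs i) (vtx vs i.+1) z) = (side_form i z <= 1).
Proof.
have h := side_height_gt0 i; rewrite /side_form ler_pdivrMr // mul1r.
by move: h; rewrite /orient /cross /side_dir /psub /porig /= => h; apply/idP/idP => H; lra.
Qed.

Lemma side_form_lt1 (i : 'I_(size vs)) z :
  (0 < orient (vtx vs i) (vtx vs i.+1) z) = (side_form i z < 1).
Proof.
have h := side_height_gt0 i; rewrite /side_form ltr_pdivrMr // mul1r.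
by move: h; rewrite /orient /cross /side_dir /psub /porig /= => h; apply/idP/idP => H; lra.
Qed.

Lemma side_form_le_gauge (i : 'I_(size vs)) v : side_form i v <= gauge v.
Proof. exact: le_bigmax. Qed.

Lemma gauge_ge0 v : 0 <= gauge v.
Proof. exact: bigmax_ge_id. Qed.

Lemma gauge_le v m :
  0 <= m -> (forall i : 'I_(size vs), side_form i v <= m) -> gauge v <= m.
Proof. by move=> m0 H; apply: bigmax_le. Qed.

Lemma gauge_lt v m :
  0 < m -> (forall i : 'I_(size vs), side_form i v < m) -> gauge v < m.
Proof. by move=> m0 H; apply: bigmax_lt. Qed.

(* Around the polygon the side directions add up to [0], so all the
   nonnegative [cross (side_dir vs i) v] vanish; two consecutive sides are not
   parallel. *)
Lemma gauge_eq0 v : gauge v = 0 -> v = porig R.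
Proof.
case: Qconvex => n3 Hconv _ Gv0.
have n2 : (2 < size vs)%N by [].
have cross_ge0 (i : 'I_(size vs)) : 0 <= cross (side_dir vs i) v.
  have := side_form_le_gauge i v; rewrite Gv0 /side_form.
  by rewrite pmulr_lle0 ?invr_gt0 ?side_height_gt0 // oppr_le0.
have sum0 : \sum_(i < size vs) cross (side_dir vs i) v = 0.
  rewrite -(big_mkord xpredT (fun i => cross (side_dir vs i) v)).
  rewrite (telescope_sumr_eq (fun k => (vtx vs k).1 * v.2 - (vtx vs k).2 * v.1)) //.
    by rewrite /vtx modnn mod0n subrr.
  by move=> k _; rewrite /cross /side_dir /psub /=; ring.
have all0 := psumr_eq0P (fun i _ => cross_ge0 i) sum0.
apply: (cross_eq0_porig (side_dir vs 0) (side_dir vs 1)).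
- rewrite gt_eqF //; have := Hconv 0%N 2%N (ltnW (ltnW n2)) n2 isT.
  by rewrite (modn_small (ltnW n2)) /orient /cross /side_dir /psub /= => /(_ isT); lra.
- exact: (all0 (Ordinal (ltnW (ltnW n2)))).
- exact: (all0 (Ordinal (ltnW n2))).
Qed.

Lemma side_form0 i : side_form i (porig R) = 0.
Proof. by rewrite /side_form /cross /porig /= !mulr0 subrr oppr0 mul0r. Qed.

Lemma gauge_attained v : exists i : 'I_(size vs), side_form i v = gauge v.
Proof.
case: (eqVneq (gauge v) 0) => [G0|]; last first.
  rewrite /gauge; elim/big_rec: _ => [/eqP //|i m _ IH m_nz].
  case: (leP m (side_form i v)) m_nz => [_ _|_ /IH //]; by exists i.
have n0 : (0 < size vs)%N by case: Qconvex => /ltnW/ltnW.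
by exists (Ordinal n0); rewrite G0 (gauge_eq0 _ G0) side_form0.
Qed.

Lemma gaugeZ l v : 0 <= l -> gauge (pscale l v) = l * gauge v.
Proof.
move=> l0; apply/le_anti/andP; split.
  apply: gauge_le => [|i]; first by rewrite mulr_ge0 ?gauge_ge0.
  by rewrite side_formZ ler_wpM2l ?side_form_le_gauge.
by have [i <-] := gauge_attained v; rewrite -side_formZ side_form_le_gauge.
Qed.

Lemma gauge0 : gauge (porig R) = 0.
Proof.
have -> : porig R = pscale 0 (porig R) by pt_ring.
by rewrite gaugeZ // mul0r.
Qed.

Lemma gaugeD u v : gauge (padd u v) <= gauge u + gauge v.
Proof.
apply: gauge_le => [|i]; first by rewrite addr_ge0 ?gauge_ge0.
by rewrite side_formD lerD ?side_form_le_gauge.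
Qed.

Lemma gauge_convex a b u v : 0 <= a -> 0 <= b ->
  gauge (padd (pscale a u) (pscale b v)) <= a * gauge u + b * gauge v.
Proof. by move=> a0 b0; rewrite -!gaugeZ //; exact: gaugeD. Qed.

Lemma gaugeD_eq_face {u v} : gauge (padd u v) = gauge u + gauge v ->
  exists i : 'I_(size vs), side_form i u = gauge u /\ side_form i v = gauge v.
Proof.
have [i <-] := gauge_attained (padd u v); rewrite side_formD => Huv; exists i.
by have := side_form_le_gauge i u; have := side_form_le_gauge i v; split; lra.
Qed.

Lemma gauge_convex_eq_face a b u v : 0 < a -> 0 < b ->
  gauge (padd (pscale a u) (pscale b v)) = a * gauge u + b * gauge v ->
  exists i : 'I_(size vs), side_form i u = gauge u /\ side_form i v = gauge v.
Proof.
move=> a0 b0; rewrite -!gaugeZ ?ltW // => /gaugeD_eq_face [i []].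
rewrite !side_formZ !gaugeZ ?ltW //.
by move=> /(mulfI (lt0r_neq0 a0)) fu /(mulfI (lt0r_neq0 b0)) fv; exists i.
Qed.

Lemma gauge_triangle a b c :
  gauge (psub a c) <= gauge (psub a b) + gauge (psub b c).
Proof.
have -> : psub a c = padd (psub a b) (psub b c) by pt_ring.
exact: gaugeD.
Qed.

Lemma gauge_on_seg {a b y} : on_seg a b y ->
  gauge (psub b a) = gauge (psub b y) + gauge (psub y a).
Proof.
case=> t [/andP[t0 t1] ->].
have -> : psub b (seg_pt a b t) = pscale (1 - t) (psub b a) by pt_ring.
have -> : psub (seg_pt a b t) a = pscale t (psub b a) by pt_ring.
by rewrite !gaugeZ ?subr_ge0 //; ring.
Qed.

Lemma gauge_crossing {a b a' b' u} : on_seg a b u -> on_seg a' b' u ->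
  gauge (psub b a') + gauge (psub b' a) <= gauge (psub b a) + gauge (psub b' a').
Proof.
move=> u_ab u_a'b'; have := gauge_on_seg u_ab; have := gauge_on_seg u_a'b'.
by have := gauge_triangle b u a'; have := gauge_triangle b' u a; lra.
Qed.

Lemma inQ_gauge z : inQ vs z <-> gauge z <= 1.
Proof.
split=> [Hz | Gz i lti].
  by apply: gauge_le => // i; rewrite -side_form_le1; apply: Hz.
by rewrite (side_form_le1 (Ordinal lti)) (le_trans _ Gz) ?side_form_le_gauge.
Qed.

Lemma intQ_gauge z : intQ vs z <-> gauge z < 1.
Proof.
split=> [Hz | Gz i lti].
  by apply: gauge_lt => // i; rewrite -side_form_lt1; apply: Hz.
by rewrite (side_form_lt1 (Ordinal lti)) (le_lt_trans _ Gz) ?side_form_le_gauge.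
Qed.

Lemma scaled_inQ l v : 0 <= l ->
  (exists q, inQ vs q /\ v = pscale l q) <-> gauge v <= l.
Proof.
move=> l0; split=> [[q [/inQ_gauge Gq ->]]|Gv].
  by rewrite gaugeZ //; have := gauge_ge0 q; nra.
case: (eqVneq l 0) => [l_eq0|l_neq0].
  exists (porig R); split; first by apply/inQ_gauge; rewrite gauge0.
  have /gauge_eq0 -> : gauge v = 0 by apply/le_anti; rewrite gauge_ge0 -l_eq0 Gv.
  by rewrite l_eq0; pt_ring.
exists (pscale l^-1 v); split; last by pt_field.
by apply/inQ_gauge; rewrite gaugeZ ?invr_ge0 // ler_pdivrMl ?lt_def ?l_neq0 // mulr1.
Qed.

Lemma scaled_intQ l v : 0 < l ->
  (exists q, intQ vs q /\ v = pscale l q) <-> gauge v < l.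
Proof.
move=> l0; split=> [[q [/intQ_gauge Gq ->]]|Gv].
  by rewrite gaugeZ ?ltW //; have := gauge_ge0 q; nra.
exists (pscale l^-1 v); split; last by pt_field; rewrite gt_eqF.
by apply/intQ_gauge; rewrite gaugeZ ?invr_ge0 ?ltW // ltr_pdivrMl // mulr1.
Qed.

Lemma hom_Qstar_gauge l c z : 0 <= l ->
  hom_Qstar vs l c z <-> gauge (psub c z) <= l.
Proof.
move=> l0; rewrite -scaled_inQ //.
split=> -[q [hq e]]; exists q; split=> //.
  by rewrite e; pt_ring.
by rewrite -e; pt_ring.
Qed.

Lemma int_hom_Qstar_gauge l c z :
  int_hom_Qstar vs l c z <-> 0 < l /\ gauge (psub c z) < l.
Proof.
split=> -[l0 Hz]; split=> //; move: Hz; rewrite -scaled_intQ //.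
  by case=> q [hq ->]; exists q; split=> //; pt_ring.
by case=> q [hq e]; exists q; split=> //; rewrite -e; pt_ring.
Qed.

Lemma dQ_gauge x y : dQ vs x y = gauge (psub y x).
Proof.
have dQ_set l : 0 <= l ->
    (exists q, inQ vs q /\ y = padd x (pscale l q)) <-> gauge (psub y x) <= l.
  move=> l0; rewrite -scaled_inQ //.
  split=> -[q [hq e]]; exists q; split=> //.
    by rewrite e; pt_ring.
  by rewrite -e; pt_ring.
apply: inf_min => [|l [l0 /dQ_set]]; last exact.
by split; [exact: gauge_ge0 | apply/dQ_set; rewrite ?gauge_ge0].
Qed.

Lemma vcell_gauge Y p x :
  vcell vs Y p x <-> forall q, q \in Y -> gauge (psub x p) <= gauge (psub x q).
Proof. by split=> H q /H; rewrite !dQ_gauge. Qed.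

Lemma empty_radius_nearest {Y p x} : p \in Y -> vcell vs Y p x ->
  empty_radius vs Y x = gauge (psub x p).
Proof.
move=> pY /vcell_gauge near_p; apply: sup_max => [|l [l0 empty_l]].
  split=> [|y yY /int_hom_Qstar_gauge [_]]; first exact: gauge_ge0.
  by apply/negP; rewrite -leNgt; apply: near_p.
rewrite leNgt; apply/negP => lt_l; apply: (empty_l p pY).
by apply/int_hom_Qstar_gauge; split=> //; apply: le_lt_trans lt_l; exact: gauge_ge0.
Qed.

Lemma Qstar_at_cell {Y p x} : p \in Y -> vcell vs Y p x ->
  Qstar_at vs Y x = [set z | gauge (psub x z) <= gauge (psub x p)].
Proof.
move=> pY px; rewrite /Qstar_at (empty_radius_nearest pY px).
by apply/seteqP; split=> z /=; rewrite hom_Qstar_gauge ?gauge_ge0.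
Qed.

(** * Homothets of [Q^*] centred on a bisector *)

(* [d] is parallel to no side of [Q] *)
Definition transversal (d : pt R) := forall i : 'I_(size vs), side_form i d != 0.

Lemma transversal_sym {p q} : transversal (psub q p) -> transversal (psub p q).
Proof.
move=> tr i; have -> : psub p q = pscale (-1) (psub q p) by pt_ring.
by rewrite side_formZ mulN1r oppr_eq0.
Qed.

Lemma transversal_neq0 {d} : transversal d -> d != porig R.
Proof.
have n0 : (0 < size vs)%N by case: Qconvex => /ltnW/ltnW.
by move=> /(_ (Ordinal n0)); apply: contra => /eqP ->; rewrite side_form0.
Qed.

Definition on_bisector (p q c : pt R) := gauge (psub c p) = gauge (psub c q).

Section Bisector.
Context {p q : pt R}.
Hypothesis pq_transversal : transversal (psub q p).

Lemma side_form_pq_neq0 (i : 'I_(size vs)) k :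
  k != 0 -> side_form i (pscale k (psub q p)) != 0.
Proof. by move=> k0; rewrite side_formZ mulf_neq0. Qed.

Lemma bisector_beyond_q {c t} : on_bisector p q c -> 1 < t ->
  gauge (psub c p) < gauge (psub c (seg_pt p q t)).
Proof.
move=> bis t_gt1; set y := seg_pt p q t; rewrite ltNge; apply/negP => y_in.
have t0 : 0 < t by lra.
have qE : psub c q = padd (pscale (1 - t^-1) (psub c p)) (pscale t^-1 (psub c y)).
  by rewrite /y; pt_field; rewrite gt_eqF.
have ha : 0 < 1 - t^-1 by rewrite subr_gt0 invf_lt1.
have hb : 0 < t^-1 by rewrite invr_gt0.
have conv := gauge_convex _ _ (psub c p) (psub c y) (ltW ha) (ltW hb).
rewrite -qE -bis in conv.
have yr : gauge (psub c y) = gauge (psub c p) by nra.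
have [|i [fp fy]] := gauge_convex_eq_face _ _ (psub c p) (psub c y) ha hb.
  by rewrite -qE yr -bis; ring.
have : side_form i (pscale t (psub q p)) != 0 by apply: side_form_pq_neq0; rewrite gt_eqF.
have -> : pscale t (psub q p) = psub (psub c p) (psub c y) by rewrite /y; pt_ring.
by rewrite side_formB fp fy yr subrr eqxx.
Qed.

(* At a crossing point [u] of the chords [c, q] and [p, c'] the triangle
   inequality for [c - u] and [u - p] would be tight, and their common side of
   [Q] parallel to [pq]. *)
Lemma bisector_chords_disjoint {c c' u} : on_bisector p q c -> on_bisector p q c' ->
  on_open_seg c q u -> on_seg p c' u -> False.
Proof.
move=> bis bis' [t [/andP[t0 t1] uE]] u_pc'; rewrite /on_bisector in bis bis'.
have u_qc : on_seg q c u by exists (1 - t); split; [lra | rewrite uE; pt_ring].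
have h1 := gauge_on_seg u_qc; have h2 := gauge_on_seg u_pc'.
have h3 := gauge_triangle c u p; have h4 := gauge_triangle c' u q.
have tight : gauge (padd (psub c u) (psub u p)) = gauge (psub c u) + gauge (psub u p).
  have -> : padd (psub c u) (psub u p) = psub c p by pt_ring.
  by lra.
have [i [fcu fup]] := gaugeD_eq_face tight.
have cuE : psub c u = pscale t (psub c q) by rewrite uE; pt_ring.
have uqE : psub u q = pscale (1 - t) (psub c q) by rewrite uE; pt_ring.
have fcq : side_form i (psub c q) = gauge (psub c q).
  by move: fcu; rewrite cuE side_formZ gaugeZ ?ltW // => /(mulfI (lt0r_neq0 t0)).
have up_uq : gauge (psub u p) = gauge (psub u q) by lra.
have := pq_transversal i; have -> : psub q p = psub (psub u p) (psub u q) by pt_ring.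
rewrite side_formB fup uqE side_formZ fcq -gaugeZ ?subr_ge0 ?ltW //.
by rewrite -uqE up_uq subrr eqxx.
Qed.

Lemma bisector_shift {c l} : 0 < l -> on_bisector p q c ->
  ~ on_bisector p q (padd c (pscale l (psub q p))).
Proof.
move=> l0 bis; set c' := padd c _ => bis'; rewrite /on_bisector in bis bis'.
have lE : pscale (l + 1) (psub c p) =
    padd (pscale l (psub c q)) (pscale 1 (psub c' p)) by rewrite /c'; pt_ring.
have rE : pscale (l + 1) (psub c' q) =
    padd (pscale 1 (psub c q)) (pscale l (psub c' p)) by rewrite /c'; pt_ring.
have l1 : 0 <= l + 1 by lra.
have hl := gauge_convex _ _ (psub c q) (psub c' p) (ltW l0) ler01.
have hr := gauge_convex _ _ (psub c q) (psub c' p) ler01 (ltW l0).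
rewrite -lE gaugeZ // in hl; rewrite -rE gaugeZ // in hr.
have rr : gauge (psub c' p) = gauge (psub c q) by rewrite -bis -bis' in hl hr *; lra.
have [|i [fcq fc'p]] := gauge_convex_eq_face _ _ (psub c q) (psub c' p) l0 ltr01.
  by rewrite -lE gaugeZ // bis rr; ring.
have : side_form i (pscale (l + 1) (psub q p)) != 0.
  by apply: side_form_pq_neq0; rewrite gt_eqF //; lra.
have -> : pscale (l + 1) (psub q p) = psub (psub c' p) (psub c q) by rewrite /c'; pt_ring.
by rewrite side_formB fcq fc'p rr subrr eqxx.
Qed.

End Bisector.

Lemma bisector_inj {p q c c'} : transversal (psub q p) ->
  on_bisector p q c -> on_bisector p q c' -> orient p q c = orient p q c' -> c = c'.
Proof.
move=> tr bis bis' s_eq; have d_neq0 := transversal_neq0 tr.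
set d := psub q p in d_neq0 *.
have c_neq : c != padd c d.
  apply/eqP => cE; move/eqP: d_neq0; apply.
  have -> : d = psub (padd c d) c by pt_ring.
  by rewrite -cE; pt_ring.
have [|l c'E] := collinear_seg_pt (y := c') c_neq.
  by move: s_eq; rewrite /d /orient /cross /padd /psub /= => ?; lra.
have {}c'E : c' = padd c (pscale l d) by rewrite c'E; pt_ring.
case: (ltgtP l 0) => [l_lt0 | l_gt0 | l0]; last by rewrite c'E l0; pt_ring.
  have cE : c = padd c' (pscale (- l) d) by rewrite c'E; pt_ring.
  have Nl_gt0 : 0 < - l by rewrite oppr_gt0.
  by case: (bisector_shift tr Nl_gt0 bis'); rewrite -cE.
by case: (bisector_shift tr l_gt0 bis); rewrite -c'E.
Qed.

Section Pencil.
Context {p q : pt R}.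
Hypothesis pq_transversal : transversal (psub q p).

Lemma bisector_disk_line {c y} : on_bisector p q c -> orient p q y = 0 ->
  gauge (psub c y) <= gauge (psub c p) -> on_seg p q y.
Proof.
move=> bis y_line y_in.
have pq_neq : p != q.
  by apply: (contraNneq _ (transversal_neq0 pq_transversal)) => ->; apply/eqP; pt_ring.
have [t yE] := collinear_seg_pt pq_neq y_line.
exists t; split=> //; rewrite yE in y_in.
apply/andP; split; rewrite leNgt; apply/negP => ht.
  have qp_tr := transversal_sym pq_transversal.
  have t' : 1 < 1 - t by lra.
  have := bisector_beyond_q qp_tr (esym bis) t'.
  have -> : seg_pt q p (1 - t) = seg_pt p q t by pt_ring.
  by move: bis; rewrite /on_bisector; lra.
by have := bisector_beyond_q pq_transversal bis ht; lra.
Qed.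

Lemma disk_chord_pq {c z} : on_bisector p q c -> gauge (psub c z) <= gauge (psub c p) ->
  0 <= orient p q z -> orient p q c <= 0 -> exists2 y, on_seg z c y & on_seg p q y.
Proof.
move=> bis z_in sz sc.
have [|t t01 st] := @between_lerp _ (orient p q z) (orient p q c) 0.
  by rewrite /between; lra.
have y_zc : on_seg z c (seg_pt z c t) by exists t.
exists (seg_pt z c t) => //; apply: bisector_disk_line bis _ _; first by rewrite orient_seg.
have := gauge_on_seg y_zc; have := gauge_ge0 (psub (seg_pt z c t) z); lra.
Qed.

Lemma disk_crossing {c c' z u} w : on_bisector p q c -> on_bisector p q c' ->
  w = p \/ w = q -> gauge (psub c z) <= gauge (psub c p) ->
  on_seg z c u -> on_seg w c' u -> gauge (psub c' z) <= gauge (psub c' p).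
Proof.
move=> bis bis' w_pq z_in u_zc u_wc'; have := gauge_crossing u_zc u_wc'.
by case: w_pq => ->; move: bis bis'; rewrite /on_bisector; lra.
Qed.

Let bary_apex c' u : bary c' p q u = orient p q u / orient p q c'.
Proof. by rewrite /bary; congr (_ / _); rewrite /orient /cross /psub /=; ring. Qed.

Lemma bisector_in_triangle {c c'} : on_bisector p q c -> on_bisector p q c' ->
  0 < orient p q c -> orient p q c <= orient p q c' ->
  0 <= bary p q c' c /\ 0 <= bary q c' p c.
Proof.
move=> bis bis' sc scc'; have sc' : 0 < orient p q c' by lra.
have C01 : 0 <= bary c' p q c <= 1.
  by rewrite bary_apex ler_pdivrMr // mul1r scc' andbT divr_ge0 // ltW.
split; rewrite leNgt; apply/negP => neg.
  have [u u_cp u_qc'] := triangle_cross_side (lt0r_neq0 sc') neg C01.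
  have qp_tr := transversal_sym pq_transversal.
  exact: (bisector_chords_disjoint qp_tr (esym bis) (esym bis') u_cp u_qc').
have qpc' : orient q p c' != 0 by rewrite orientNC oppr_eq0 lt0r_neq0.
rewrite -bary_flip in neg; rewrite -bary_flip in C01.
have [u u_cq u_pc'] := triangle_cross_side qpc' neg C01.
exact: (bisector_chords_disjoint pq_transversal bis bis' u_cq u_pc').
Qed.

(* The disk of [c'] contains the triangle [p q c'], which contains a point [y]
   of the chord [z, c]; either [z] is in the triangle too, or [z, y] leaves it
   through [c' p] or [c' q], where [disk_crossing] applies. *)
Lemma disk_mono_pos {c c' z} : on_bisector p q c -> on_bisector p q c' ->
  orient p q c <= orient p q c' -> 0 < orient p q c' -> 0 <= orient p q z ->
  gauge (psub c z) <= gauge (psub c p) -> gauge (psub c' z) <= gauge (psub c' p).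
Proof.
move=> bis bis' scc' sc' sz z_in; have D := lt0r_neq0 sc'.
have [y y_zc [Ay By Cy]] : exists2 y, on_seg z c y &
    [/\ 0 <= bary p q c' y, 0 <= bary q c' p y & 0 <= bary c' p q y].
  case: (leP (orient p q c) 0) => sc.
    have [y y_zc y_pq] := disk_chord_pq bis z_in sz sc.
    by have [Ay By Cy] := on_seg_bary D y_pq; exists y => //; split; rewrite ?Cy.
  have [Ac Bc] := bisector_in_triangle bis bis' sc scc'.
  exists c; first by exists 1; split; [lra | rewrite seg_pt1].
  by split=> //; rewrite bary_apex divr_ge0 ?ltW.
have Cz : 0 <= bary c' p q z by rewrite bary_apex divr_ge0 // ltW.
case: (triangle_exit D Ay By Cy Cz) => [[Az Bz] | [u u_yz u_edge]].
  rewrite (bary_decomp D z); apply: le_trans (gauge_convex _ _ _ _ Az Bz) _.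
  have := bary_sum D z; have := gauge_ge0 (psub c' p); rewrite -bis'; nra.
have u_zc : on_seg z c u := on_seg_sub y_zc (on_seg_sym u_yz).
case: u_edge => [u_qc' | /on_seg_sym u_pc'].
  by apply: (disk_crossing q bis bis' _ z_in u_zc u_qc'); right.
by apply: (disk_crossing p bis bis' _ z_in u_zc u_pc'); left.
Qed.

(* Here the chord [z, c] meets [p, q] at [y], and [y, c] leaves the triangle
   [p q c'] through [c' p] or [c' q] unless [c = c']. *)
Lemma disk_mono_nonpos {c c' z} : on_bisector p q c -> on_bisector p q c' ->
  orient p q c <= orient p q c' -> orient p q c' <= 0 -> 0 <= orient p q z ->
  gauge (psub c z) <= gauge (psub c p) -> gauge (psub c' z) <= gauge (psub c' p).
Proof.
move=> bis bis' scc' sc' sz z_in.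
have [y y_zc y_pq] := disk_chord_pq bis z_in sz (le_trans scc' sc').
case: (eqVneq (orient p q c') 0) => [sc'0 | D].
  have c'_in : gauge (psub c' c') <= gauge (psub c' p).
    have -> : psub c' c' = porig R by pt_ring.
    by rewrite gauge0 gauge_ge0.
  have c'_pq := bisector_disk_line bis' sc'0 c'_in.
  case: (on_seg_split c'_pq y_pq) => [y_pc' | y_qc'].
    by apply: (disk_crossing p bis bis' _ z_in y_zc y_pc'); left.
  by apply: (disk_crossing q bis bis' _ z_in y_zc y_qc'); right.
have sc'_lt0 : orient p q c' < 0 by rewrite lt_neqAle D.
have [Ay By Cy] := on_seg_bary D y_pq.
have Cy' : 0 <= bary c' p q y by rewrite Cy.
have Cc : 1 <= bary c' p q c by rewrite bary_apex ler_ndivlMr // mul1r.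
case: (triangle_exit D Ay By Cy' (le_trans ler01 Cc)) => [[Ac Bc] | [u u_yc u_edge]].
  have C1 : bary c' p q c = 1 by have := bary_sum D c; lra.
  have scc'_eq : orient p q c = orient p q c'.
    by rewrite -[LHS](divfK D) -bary_apex C1 mul1r.
  by rewrite -(bisector_inj pq_transversal bis bis' scc'_eq).
have u_zc : on_seg z c u.
  exact: on_seg_sym (on_seg_sub (on_seg_sym y_zc) (on_seg_sym u_yc)).
case: u_edge => [u_qc' | /on_seg_sym u_pc'].
  by apply: (disk_crossing q bis bis' _ z_in u_zc u_qc'); right.
by apply: (disk_crossing p bis bis' _ z_in u_zc u_pc'); left.
Qed.

Lemma disk_mono {c c' z} : on_bisector p q c -> on_bisector p q c' ->
  orient p q c <= orient p q c' -> 0 <= orient p q z ->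
  gauge (psub c z) <= gauge (psub c p) -> gauge (psub c' z) <= gauge (psub c' p).
Proof.
move=> bis bis' scc' sz z_in; case: (ltP 0 (orient p q c')) => sc'.
  exact: disk_mono_pos bis bis' scc' sc' sz z_in.
exact: disk_mono_nonpos bis bis' scc' sc' sz z_in.
Qed.

End Pencil.

Definition on_vedge Y p q x := vcell vs Y p x /\ vcell vs Y q x.

Lemma on_vedge_bisector {Y p q x} : p \in Y -> q \in Y -> on_vedge Y p q x ->
  on_bisector p q x.
Proof.
move=> pY qY [/vcell_gauge px /vcell_gauge qx].
by apply/le_anti; rewrite px ?qx.
Qed.

Lemma general_position_transversal {Y p q} : general_position vs Y ->
  p \in Y -> q \in Y -> p != q -> transversal (psub q p).
Proof.
case=> _ gp _ pY qY pq i; have := gp p q i pY qY pq (ltn_ord i).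
rewrite /side_form mulf_eq0 invr_eq0 oppr_eq0 negb_or => cr.
rewrite (lt0r_neq0 (side_height_gt0 i)) andbT; apply: contra cr.
by rewrite /cross => /eqP cr0; apply/eqP; lra.
Qed.

Lemma Qstar_at_between {Y p q c1 c c2} : transversal (psub q p) ->
  p \in Y -> q \in Y -> on_vedge Y p q c1 -> on_vedge Y p q c -> on_vedge Y p q c2 ->
  between (orient p q c1) (orient p q c2) (orient p q c) ->
  Qstar_at vs Y c `<=` Qstar_at vs Y c1 `|` Qstar_at vs Y c2.
Proof.
move=> tr pY qY.
wlog le_c12 : c1 c2 / orient p q c1 <= orient p q c <= orient p q c2.
  move=> W e1 e e2 [sc | sc]; first by apply: W => //; left.
  by rewrite setUC; apply: W => //; left.
move=> e1 e e2 _; case/andP: le_c12 => s1 s2.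
have b1 := on_vedge_bisector pY qY e1; have b := on_vedge_bisector pY qY e.
have b2 := on_vedge_bisector pY qY e2.
rewrite (Qstar_at_cell pY (proj1 e)) (Qstar_at_cell pY (proj1 e1)).
rewrite (Qstar_at_cell pY (proj1 e2)) => z /= z_in.
case: (leP 0 (orient p q z)) => sz; first by right; exact: (disk_mono tr b b2 s2 sz z_in).
left; rewrite b1; rewrite b in z_in.
apply: (disk_mono (transversal_sym tr) (esym b) (esym b1)) z_in.
  by rewrite (orientNC p q c) (orientNC p q c1) lerN2.
by rewrite orientNC oppr_ge0 ltW.
Qed.

Lemma Qstar_at_consecutive {Y w1 w2 x} : general_position vs Y ->
  consecutive_on_edge vs Y w1 w2 -> on_seg w1 w2 x ->
  Qstar_at vs Y x `<=` Qstar_at vs Y w1 `|` Qstar_at vs Y w2.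
Proof.
move=> gp [_ _ _ [p [q [pY qY pq on_edge _]]]] [t [t01 ->]].
apply: (Qstar_at_between (general_position_transversal gp pY qY pq) pY qY).
- by apply: on_edge; exists 0; rewrite seg_pt0 lexx ler01.
- by apply: on_edge; exists t.
- by apply: on_edge; exists 1; rewrite seg_pt1 lexx ler01.
- exact: seg_affine_between (orient_seg_affine p q) t01.
Qed.

Lemma Qstar_at_edge_between {Y w1 w2 x} : general_position vs Y ->
  on_edge_between vs Y w1 w2 x ->
  Qstar_at vs Y x `<=` Qstar_at vs Y w1 `|` Qstar_at vs Y w2.
Proof.
move=> gp [p [q [us [pY qY pq [_ path [i0 [i0k [t0 [t0_01 ->]]]]]]]]].
set P := nth w1 (w1 :: rcons us w2) in path *; set k := size us in i0k path.
have tr := general_position_transversal gp pY qY pq.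
have cells i t : (i <= k)%N -> 0 <= t <= 1 -> on_vedge Y p q (seg_pt (P i) (P i.+1) t).
  by move=> ik t01; have [] := path i t ik t01.
have e1 : on_vedge Y p q (P 0).
  by have := cells 0%N 0 (leq0n k); rewrite seg_pt0 lexx ler01; apply.
have Pk : P k.+1 = w2 by rewrite /P /= nth_rcons ltnn eqxx.
have e2 : on_vedge Y p q (P k.+1).
  by have := cells k 1 (leqnn k); rewrite seg_pt1 lexx ler01; apply.
have bis i t (ik : (i <= k)%N) (t01 : 0 <= t <= 1) :=
  on_vedge_bisector pY qY (cells i t ik t01).
rewrite -[w1]/(P 0) -Pk.
apply: (Qstar_at_between tr pY qY e1 (cells i0 t0 i0k t0_01) e2).
apply: (polyline_between (P := P) (orient_seg_affine p q)) => // i t ik t01 si.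
  have [_ _ at_w1 _ _] := path i t ik t01; apply: at_w1.
  exact: bisector_inj tr (bis i t ik t01) (on_vedge_bisector pY qY e1) si.
have [_ _ _ at_w2 _] := path i t ik t01; apply: at_w2; rewrite -Pk.
exact: bisector_inj tr (bis i t ik t01) (on_vedge_bisector pY qY e2) si.
Qed.

End Gauge.

Theorem lemma3 (R : realType) (vs : seq (pt R)) (Y : seq (pt R)) :
  convex_polygon_0 vs -> general_position vs Y ->
  (forall w1 w2 x : pt R, consecutive_on_edge vs Y w1 w2 -> on_seg w1 w2 x ->
     Qstar_at vs Y x `<=` Qstar_at vs Y w1 `|` Qstar_at vs Y w2) /\
  (forall w1 w2 x : pt R, vor_vertex vs Y w1 -> vor_vertex vs Y w2 ->
     on_edge_between vs Y w1 w2 x ->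
     Qstar_at vs Y x `<=` Qstar_at vs Y w1 `|` Qstar_at vs Y w2).
Proof.
move=> Qconvex gp; split=> w1 w2 x; first exact: Qstar_at_consecutive.
by move=> _ _; exact: Qstar_at_edge_between.
Qed.
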